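(* Let two probabilistically equivalent models (each one of the linear dynamic models described in the context) be written in stacked form as $$T_1x=v,\qquad T_2y=w,$$ where $x,y$ are zero-mean nonsingular Gaussian sequences over $[0,N]$, $T_1,T_2$ are nonsingular matrices determined by the model parameters, and $v,w$ are the zero-mean Gaussian vectors of dynamic noise and boundary values with nonsingular covariances $\mathrm{Cov}(v)=P_1$, $\mathrm{Cov}(w)=P_2$. Then the two models are algebraically equivalent if and only if $$T_2'P_2^{-1}w=T_1'P_1^{-1}v .$$
   Context: Sequences are indexed by $[0,N]=(0,1,\ldots,N)$, $x_k\in\mathbb{R}^d$, $'$ denotes transpose. The models considered are linear dynamic models of the following types: forward/backward Markov, reciprocal, and forward/backward $CM_L$ and $CM_F$ models; each such model with its boundary condition can be written as $Tx=v$ with $T$ nonsingular and $v$ stacking the dynamic noise and boundary values. Two models are probabilistically equivalent (PE) if $x$ and $y$ have the same distribution, and algebraically equivalent (AE) if $x=y$ path-wise. *)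

From HB Require Import structures.
From mathcomp Require Import all_boot all_order all_algebra.
From mathcomp Require Import all_classical all_reals all_analysis.
Set Implicit Arguments. Unset Strict Implicit. Unset Printing Implicit Defensive.
Import Order.TTheory GRing.Theory Num.Theory.
Local Open Scope classical_set_scope.
Local Open Scope ring_scope.

(* The random vector seen as an n-tuple, i.e. a point of the product
   measurable space n.-tuple R (product of Borel sigma-algebras). *)
Definition rv_tuple {d} {Omega : measurableType d} {R : realType} {n : nat}
  (x : Omega -> 'cV[R]_n) : Omega -> n.-tuple R :=
  fun w => [tuple x w i 0 | i < n].

Definition centered_nonsingular_gaussian {d} {Omega : measurableType d}
  {R : realType} (P : probability Omega R) {n : nat}
  (x : Omega -> 'cV[R]_n) (K : 'M[R]_n) : Prop :=
  [/\ forall i : 'I_n, measurable_fun setT (fun w => x w i 0),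
      K^T = K,
      forall a : 'rV[R]_n, a != 0 -> 0 < (a *m K *m a^T) 0 0 &
      forall a : 'rV[R]_n, a != 0 -> forall A : set R, measurable A ->
        P ((fun w => (a *m x w) 0 0) @^-1` A)
        = normal_prob 0 (Num.sqrt ((a *m K *m a^T) 0 0)) A ].

Definition prob_equiv {d} {Omega : measurableType d} {R : realType}
  (P : probability Omega R) {n : nat} (x y : Omega -> 'cV[R]_n) : Prop :=
  forall A : set (n.-tuple R), measurable A ->
    P (rv_tuple x @^-1` A) = P (rv_tuple y @^-1` A).

Definition alg_equiv {Omega : Type} {R : realType} {n : nat}
  (x y : Omega -> 'cV[R]_n) : Prop :=
  forall w, x w = y w.

From HB Require Import structures.
From mathcomp Require Import all_boot all_order all_algebra.
From mathcomp Require Import all_classical all_reals all_analysis.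
Import Order.TTheory GRing.Theory Num.Theory.

Set Implicit Arguments.
Unset Strict Implicit.
Unset Printing Implicit Defensive.
Local Open Scope classical_set_scope.
Local Open Scope ring_scope.

(** Writing [x = T1^-1 v], every linear functional [b x] is centred
    normal with variance [b Q1 b'], where [Q1 = T1^-1 P1 T1^-T] is the
    covariance of [x]; likewise for [y] with [Q2].  Probabilistic equivalence
    forces these laws, hence the variances, hence (by polarization) [Q1 = Q2].
    Inverting, the information matrices [M_i = T_i' P_i^-1 T_i] coincide, and
    [T1' P1^-1 v = M x], [T2' P2^-1 w = M y] with [M] invertible. *)

Section NormalLaw.
Variable R : realType.

Lemma normal_pdf_mean (m s : R) : s != 0 -> normal_pdf m s m = normal_peak s.
Proof.
by move=> s0; rewrite normal_pdfE //= /normal_fun subrr expr0n oppr0 mul0r expR0 mulr1.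
Qed.

Lemma normal_peak_inj (s1 s2 : R) : 0 < s1 -> 0 < s2 ->
  normal_peak s1 = normal_peak s2 -> s1 = s2.
Proof.
move=> s1p s2p /invr_inj/eqP.
have ge0 (s : R) : 0 <= s ^+ 2 * pi *+ 2 by rewrite mulrn_wge0 // mulr_ge0 ?pi_ge0 // sqr_ge0.
have pi2 : pi *+ 2 != 0 :> R by rewrite mulrn_eq0 /= gt_eqF // pi_gt0.
rewrite eqr_sqrt // -!mulrnAr (inj_eq (mulIf pi2)) eqrXn2 ?ltW //.
exact/eqP.
Qed.

(* The density at the mean, hence the standard deviation, is the derivative
   of [t |-> normal_prob m s `[m - 1, t]] at [t = m]. *)
Lemma normal_prob_sigma_inj (m s1 s2 : R) : 0 < s1 -> 0 < s2 ->
  (forall A, measurable A -> normal_prob m s1 A = normal_prob m s2 A) -> s1 = s2.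
Proof.
move=> s1p s2p eq_prob.
have cdf_derive (s : R) : 0 < s ->
    let F := fun t => \int[lebesgue_measure]_(u in `[m - 1, t]) normal_pdf m s u in
    (F^`())%classic m = normal_pdf m s m.
  move=> sp F.
  have int_pdf : lebesgue_measure.-integrable `[m - 1, m + 1] (EFin \o normal_pdf m s).
    by apply: integrableS (integrable_normal_pdf m s) => //; exact: measurable_itv.
  have lt_m1 : m < m + 1 by rewrite ltrDl.
  have gt_m1 : m - 1 < m by rewrite gtrDl oppr_lt0.
  by have [_ ->] := continuous_FTC1_closed lt_m1 int_pdf gt_m1
    (@continuous_normal_pdf R m s (lt0r_neq0 sp) m).
have eq_pdf : normal_pdf m s1 m = normal_pdf m s2 m.
  rewrite -(cdf_derive _ s1p) -(cdf_derive _ s2p); congr ((_^`())%classic m).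
  apply/funext => t; rewrite /Rintegral; congr fine.
  by apply: eq_prob; exact: measurable_itv.
by apply: normal_peak_inj => //; rewrite -!(normal_pdf_mean m) ?lt0r_neq0.
Qed.

End NormalLaw.

Section QuadraticForms.
Variables (R : numFieldType) (n : nat).
Implicit Types (A B M : 'M[R]_n) (b : 'rV[R]_n).

Definition qform A b : R := (b *m A *m b^T) 0 0.

Lemma qformB A B b : qform (A - B) b = qform A b - qform B b.
Proof. by rewrite /qform mulmxBr mulmxBl !mxE. Qed.

Lemma qform_congr M A b : qform (M *m A *m M^T) b = qform A (b *m M).
Proof. by rewrite /qform trmx_mul !mulmxA. Qed.

Lemma posdef_unitmx A : (forall b, b != 0 -> 0 < qform A b) -> A \in unitmx.
Proof.
move=> posA; rewrite -row_free_unit -kermx_eq0; apply: contraT => kerA_nz.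
have [i kerAi] : exists i, row i (kermx A) != 0.
  apply/existsP; move: kerA_nz; apply: contraNT; rewrite negb_exists => /forallP rows0.
  by apply/eqP/row_matrixP => i; rewrite row0; apply/eqP/negPn.
by have := posA _ kerAi; rewrite /qform -row_mul mulmx_ker row0 !mul0mx mxE ltxx.
Qed.

(* Polarization: [qform A (e_i + e_j) - qform A e_i - qform A e_j = 2 A i j]. *)
Lemma sym_qform0 A : A^T = A -> qform A =1 (fun=> 0) -> A = 0.
Proof.
move=> symA qA0.
pose e i : 'rV[R]_n := delta_mx 0 i.
have qformE i j : (e i *m A *m (e j)^T) 0 0 = A i j.
  by rewrite /e -rowE trmx_delta -colE !mxE.
apply/matrixP => i j; rewrite mxE.
have addE (a c : 'M[R]_1) : (a + c) 0 0 = a 0 0 + c 0 0 by rewrite mxE.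
have := qA0 (e i + e j).
rewrite /qform linearD /= !(mulmxDl, mulmxDr) !addE !qformE.
have := qA0 (e i); rewrite /qform qformE => ->.
have := qA0 (e j); rewrite /qform qformE => ->.
have -> : A j i = A i j by rewrite -[in LHS]symA mxE.
by rewrite add0r addr0 -mulr2n => /eqP; rewrite mulrn_eq0 => /eqP.
Qed.

Lemma sym_qform_inj A B : A^T = A -> B^T = B -> qform A =1 qform B -> A = B.
Proof.
move=> symA symB qAB; apply/eqP; rewrite -subr_eq0; apply/eqP/sym_qform0.
  by rewrite linearB /= symA symB.
by move=> b; rewrite qformB qAB subrr.
Qed.

End QuadraticForms.

Section CovarianceInformation.
Variables (R : fieldType) (n : nat).
Implicit Types (T K : 'M[R]_n).

Definition cov_mx T K := invmx T *m K *m (invmx T)^T.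

Definition info_mx T K := T^T *m invmx K *m T.

Lemma cov_mx_sym T K : K^T = K -> (cov_mx T K)^T = cov_mx T K.
Proof. by move=> symK; rewrite /cov_mx !trmx_mul trmxK symK mulmxA. Qed.

Lemma mulmx_cov_info T K : T \in unitmx -> K \in unitmx ->
  cov_mx T K *m info_mx T K = 1%:M.
Proof.
move=> uT uK; have invT_tr : (invmx T)^T *m T^T = 1%:M.
  by rewrite -trmx_mul mulmxV // trmx1.
rewrite /cov_mx /info_mx !mulmxA -[_ *m (invmx T)^T *m T^T]mulmxA invT_tr mulmx1.
by rewrite -[_ *m K *m invmx K]mulmxA mulmxV // mulmx1 mulVmx.
Qed.

End CovarianceInformation.

Section GaussianModels.
Variables (R : realType) (dm : measure_display) (Omega : measurableType dm).
Variables (P : probability Omega R) (n : nat).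
Implicit Types (T K : 'M[R]_n) (x y v : Omega -> 'cV[R]_n) (b : 'rV[R]_n).

Lemma prob_equiv_linear x y b (A : set R) : prob_equiv P x y -> measurable A ->
  P ((fun o => (b *m x o) 0 0) @^-1` A) = P ((fun o => (b *m y o) 0 0) @^-1` A).
Proof.
move=> xy mA; pose f (t : n.-tuple R) := \sum_i b 0 i * tnth t i.
have linE z : (fun o => (b *m z o) 0 0) @^-1` A = rv_tuple z @^-1` (f @^-1` A).
  apply/funext => o /=; congr A; rewrite mxE; apply: eq_bigr => i _.
  by rewrite tnth_mktuple.
have mf : measurable_fun setT f.
  apply: measurable_sum => i; apply: measurable_realfun.measurable_funM => //.
  exact: measurable_tnth.
by rewrite !linE; apply: xy; rewrite -[_ @^-1` A]setTI; exact: mf.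
Qed.

Variables (T K : 'M[R]_n) (x v : Omega -> 'cV[R]_n).
Hypotheses (uT : T \in unitmx) (model : forall o, T *m x o = v o).
Hypothesis gauss_v : centered_nonsingular_gaussian P v K.

Lemma mul_invmx_neq0 b : b != 0 -> b *m invmx T != 0.
Proof. by apply: contra => /eqP bT0; rewrite -(mulmxKV uT b) bT0 mul0mx. Qed.

Lemma model_cov_posdef b : b != 0 -> 0 < qform (cov_mx T K) b.
Proof.
move=> b0; have [_ _ posK _] := gauss_v.
by rewrite /cov_mx qform_congr; apply/posK/mul_invmx_neq0.
Qed.

Lemma model_linear_law b (A : set R) : b != 0 -> measurable A ->
  P ((fun o => (b *m x o) 0 0) @^-1` A)
  = normal_prob 0 (Num.sqrt (qform (cov_mx T K) b)) A.
Proof.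
move=> b0 mA; have [_ _ _ law_v] := gauss_v.
have -> : (fun o => (b *m x o) 0 0) = (fun o => (b *m invmx T *m v o) 0 0).
  by apply/funext => o; rewrite -model mulmxA mulmxKV.
by rewrite /cov_mx qform_congr; apply: law_v => //; exact: mul_invmx_neq0.
Qed.

End GaussianModels.

Lemma prob_equiv_model_cov (R : realType) (dm : measure_display)
    (Omega : measurableType dm) (P : probability Omega R) (n : nat)
    (T1 T2 K1 K2 : 'M[R]_n) (x y v w : Omega -> 'cV[R]_n) :
  T1 \in unitmx -> T2 \in unitmx ->
  (forall o, T1 *m x o = v o) -> (forall o, T2 *m y o = w o) ->
  centered_nonsingular_gaussian P v K1 -> centered_nonsingular_gaussian P w K2 ->
  prob_equiv P x y -> cov_mx T1 K1 = cov_mx T2 K2.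
Proof.
move=> uT1 uT2 model1 model2 gauss_v gauss_w xy.
have [_ symK1 _ _] := gauss_v; have [_ symK2 _ _] := gauss_w.
apply: sym_qform_inj; [exact: cov_mx_sym | exact: cov_mx_sym | move=> b].
have [->|b0] := eqVneq b 0; first by rewrite /qform !mul0mx.
have pos1 := model_cov_posdef uT1 gauss_v b0.
have pos2 := model_cov_posdef uT2 gauss_w b0.
apply/eqP; rewrite -(eqr_sqrt (ltW pos1) (ltW pos2)); apply/eqP.
apply: (@normal_prob_sigma_inj _ 0); [by rewrite sqrtr_gt0 | by rewrite sqrtr_gt0 | move=> A mA].
rewrite -(model_linear_law uT1 model1 gauss_v b0 mA).
rewrite -(model_linear_law uT2 model2 gauss_w b0 mA).
exact: prob_equiv_linear.
Qed.

Theorem theorem1 (R : realType) (dm : measure_display) (Omega : measurableType dm)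
  (P : probability Omega R) (N d : nat)
  (T1 T2 P1 P2 : 'M[R]_(N.+1 * d))
  (x y v w : Omega -> 'cV[R]_(N.+1 * d)) :
  T1 \in unitmx -> T2 \in unitmx ->
  (forall o, T1 *m x o = v o) ->
  (forall o, T2 *m y o = w o) ->
  centered_nonsingular_gaussian P v P1 ->
  centered_nonsingular_gaussian P w P2 ->
  prob_equiv P x y ->
  (alg_equiv x y <->
   forall o, T2^T *m invmx P2 *m w o = T1^T *m invmx P1 *m v o).
Proof.
move=> uT1 uT2 model1 model2 gauss_v gauss_w xy.
have [_ _ posP1 _] := gauss_v; have [_ _ posP2 _] := gauss_w.
have cov_info1 := mulmx_cov_info uT1 (posdef_unitmx posP1).
have cov_info2 := mulmx_cov_info uT2 (posdef_unitmx posP2).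
have cov_eq := prob_equiv_model_cov uT1 uT2 model1 model2 gauss_v gauss_w xy.
have info_eq : info_mx T1 P1 = info_mx T2 P2.
  by rewrite -[LHS]mulmx1 -cov_info2 -cov_eq mulmxA (mulmx1C cov_info1) mul1mx.
have scoreE T K z o : T^T *m invmx K *m (T *m z o) = info_mx T K *m z o.
  by rewrite mulmxA.
split=> [xy_eq o | score_eq o].
- by rewrite -model1 -model2 !scoreE xy_eq info_eq.
- rewrite -[x o]mul1mx -cov_info1 -mulmxA -scoreE model1 -score_eq -model2.
  by rewrite scoreE -info_eq mulmxA cov_info1 mul1mx.
Qed.
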